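(* Let $X$ be a $T_1$ space and $\mathcal{P}$ an ideal of closed subsets of $X$ containing every singleton subset of $X$. The following are equivalent: (1) $C(X)=C(X)_\mathcal{P}$; (2) $X$ is discrete; (3) $C(X)_\mathcal{P}$ is a ring of quotients of $C(X)$.
   Context: An ideal of closed subsets of $X$ is a family $\mathcal{P}$ of closed subsets closed under finite unions and under passing to closed subsets. $D_f$ is the set of discontinuity points of $f\in\mathbb{R}^X$; $C(X)_\mathcal{P}=\{f\in\mathbb{R}^X\colon\overline{D_f}\in\mathcal{P}\}$; $C(X)$ is the ring of continuous real-valued functions on $X$. A ring $S$ containing a reduced ring $R$ is a ring of quotients of $R$ if for each $s\in S\setminus\{0\}$ there is $r\in R$ with $sr\in R\setminus\{0\}$. *)

From HB Require Import structures.
From mathcomp Require Import all_boot all_order all_algebra.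
From mathcomp Require Import all_classical all_reals all_analysis.
Set Implicit Arguments. Unset Strict Implicit. Unset Printing Implicit Defensive.
Import Order.TTheory GRing.Theory Num.Theory.
Import numFieldNormedType.Exports.
Local Open Scope classical_set_scope.
Local Open Scope ring_scope.

Definition discrete_top (X : topologicalType) : Prop := forall A : set X, open A.

Definition closed_ideal (X : topologicalType) (P : set (set X)) : Prop :=
  [/\ (forall A, P A -> closed A),
      P set0,
      (forall A B, P A -> P B -> P (A `|` B)) &
      (forall A B, P A -> closed B -> B `<=` A -> P B)].

Definition discont (X : topologicalType) (R : realType) (f : X -> R) : set X :=
  [set x : X | ~ {for x, continuous f}].

Definition CX (X : topologicalType) (R : realType) : set (X -> R) :=
  [set f | continuous f].

Definition CXP (X : topologicalType) (R : realType) (P : set (set X)) :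
  set (X -> R) := [set f | P (closure (discont f))].

Definition subring_fun (X : Type) (R : realType) (S : set (X -> R)) : Prop :=
  [/\ S (fun _ => 0), S (fun _ => 1),
      (forall f g, S f -> S g -> S (fun x => f x - g x)) &
      (forall f g, S f -> S g -> S (fun x => f x * g x))].

Definition ring_of_quotients (X : Type) (R : realType) (Rg S : set (X -> R)) : Prop :=
  [/\ subring_fun Rg, subring_fun S, Rg `<=` S &
      (forall s, S s -> s <> (fun _ => 0) ->
         exists2 r, Rg r & Rg (fun x => s x * r x) /\ (fun x => s x * r x) <> (fun _ => 0))].

From HB Require Import structures.
From mathcomp Require Import all_boot all_order all_algebra.
From mathcomp Require Import all_classical all_reals all_analysis.
Set Implicit Arguments. Unset Strict Implicit. Unset Printing Implicit Defensive.
Import numFieldNormedType.Exports.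
Import GRing.Theory Num.Theory.
Local Open Scope classical_set_scope.
Local Open Scope ring_scope.

(** The indicator [\1_[set x]] of a point has its discontinuities inside the
    closed set [{x}] of a T1 space, so it lies in [C(X)_P].  A function
    continuous at [x] that vanishes off [x] but not at [x] makes [{x}] a
    neighbourhood of [x].  Hence [C(X) = C(X)_P] forces every point to be
    isolated, and so does [C(X)_P] being a ring of quotients of [C(X)], since
    then [\1_[set x] * r] is such a function for some continuous [r].
    Conversely, on a discrete space every function is continuous, so both
    rings are all of [R^X]. *)

Lemma discrete_top_set1 (X : topologicalType) :
  (forall x : X, open [set x]) -> discrete_top X.
Proof.
move=> set1_open A; rewrite openE => x Ax.
apply: (@filterS _ _ _ [set x]); first by move=> y ->.
exact: open_nbhs_nbhs.
Qed.

Lemma discrete_continuous (X Y : topologicalType) (f : X -> Y) :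
  discrete_top X -> continuous f.
Proof. by move=> Xdisc; apply/continuousP => A _; exact: Xdisc. Qed.

Lemma discont_discrete (X : topologicalType) (R : realType) (f : X -> R) :
  discrete_top X -> discont f = set0.
Proof.
by move=> Xdisc; apply/seteqP; split => // x; apply; exact: discrete_continuous.
Qed.

Lemma open_set1_of_continuous (X : topologicalType) (R : realFieldType)
    (g : X -> R) (x : X) :
  (forall y, g y != 0 -> y = x) -> {for x, continuous g} -> g x != 0 ->
  open [set x].
Proof.
move=> supp_g gx_cont gx_neq0; rewrite openE => _ ->.
have : nbhs x (g @^-1` [set z | z != 0]).
  by apply: gx_cont; apply: open_nbhs_nbhs; split => //; exact: open_neq.
by apply: filterS => y /supp_g.
Qed.

Lemma discont_indic_closed (X : topologicalType) (R : realType) (A : set X) :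
  closed A -> discont (\1_A : X -> R) `<=` A.
Proof.
move=> A_closed y y_disc; apply: contrapT => Ay; apply: y_disc.
apply: (near_cst_continuous 0).
have /open_nbhs_nbhs : open_nbhs y (~` A) by split => //; exact: closed_openC.
by apply: filterS => z Az; rewrite indicE memNset.
Qed.

Lemma CXP_indic_set1 (R : realType) (X : topologicalType) (P : set (set X))
    (x : X) :
  accessible_space X -> closed_ideal P -> P [set x] ->
  CXP P (\1_[set x] : X -> R).
Proof.
move=> XT1 [_ _ _ P_closed_sub] Px.
have x_closed : closed [set x] by exact: accessible_closed_set1.
apply: (P_closed_sub [set x]) => //; first exact: closed_closure.
rewrite [Z in _ `<=` Z](closure_id _).1 //.
by apply: closureS; exact: discont_indic_closed.
Qed.

Lemma CX_discrete (X : topologicalType) (R : realType) :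
  discrete_top X -> @CX X R = setT.
Proof.
by move=> Xdisc; apply/seteqP; split => // f _; exact: discrete_continuous.
Qed.

Lemma CXP_discrete (X : topologicalType) (R : realType) (P : set (set X)) :
  discrete_top X -> P set0 -> @CXP X R P = setT.
Proof.
move=> Xdisc P0; apply/seteqP; split => // f _.
by rewrite /CXP /= discont_discrete // closure0.
Qed.

Lemma ring_of_quotients_setT (X : Type) (R : realType) :
  @ring_of_quotients X R setT setT.
Proof.
have subring_setT : @subring_fun X R setT by [].
split=> // s _ s_neq0; exists (fun _ => 1) => //; split => //.
by under eq_fun do rewrite mulr1.
Qed.

Lemma indic_set1_neq0 (T : Type) (R : pzRingType) (x y : T) :
  (\1_[set x] y : R) != 0 -> y = x.
Proof. by apply: contra_neqP => yx; rewrite indicE memNset. Qed.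

Section DiscreteCharacterization.
Variables (R : realType) (X : topologicalType) (P : set (set X)).
Hypotheses (XT1 : accessible_space X) (P_ideal : closed_ideal P)
  (P_set1 : forall x : X, P [set x]).

Lemma discrete_of_CX_eq_CXP : @CX X R = CXP P -> discrete_top X.
Proof.
move=> CX_eq; apply: discrete_top_set1 => x.
have : CX (\1_[set x] : X -> R) by rewrite CX_eq; exact: CXP_indic_set1.
move/(_ x)/(open_set1_of_continuous (@indic_set1_neq0 _ R x)); apply.
by rewrite indicE mem_set // oner_neq0.
Qed.

Lemma discrete_of_ring_of_quotients :
  ring_of_quotients (@CX X R) (CXP P) -> discrete_top X.
Proof.
case=> _ _ _ quot; apply: discrete_top_set1 => x.
have indic_neq0 : (\1_[set x] : X -> R) <> (fun _ => 0).
  by move/(congr1 (fun f => f x))/eqP; rewrite indicE mem_set // oner_eq0.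
have indic_CXP : CXP P (\1_[set x] : X -> R) by exact: CXP_indic_set1.
have [r _ [sr_cont sr_neq0]] := quot _ indic_CXP indic_neq0.
have [y sry_neq0] : exists y, \1_[set x] y * r y != 0.
  apply/not_existsP => sr0; apply/sr_neq0/funext => y.
  by apply/eqP; apply: contra_notT (sr0 y).
have sr_supp z : \1_[set x] z * r z != 0 -> z = x.
  move=> srz_neq0; apply: (@indic_set1_neq0 _ R).
  by apply: contraNneq srz_neq0 => ->; rewrite mul0r.
have yx := sr_supp y sry_neq0; subst y.
exact: open_set1_of_continuous sr_supp (sr_cont x) sry_neq0.
Qed.

End DiscreteCharacterization.

Theorem proposition5p4 (R : realType) (X : topologicalType) (P : set (set X))
  (hT1 : accessible_space X) (hP : closed_ideal P)
  (hsing : forall x : X, P [set x]) :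
  [/\ (@CX X R = @CXP X R P <-> discrete_top X),
      (discrete_top X <-> ring_of_quotients (@CX X R) (@CXP X R P)) &
      (@CX X R = @CXP X R P <-> ring_of_quotients (@CX X R) (@CXP X R P))].
Proof.
have [_ P0 _ _] := hP.
have i12 := @discrete_of_CX_eq_CXP R X P hT1 hP hsing.
have i32 := @discrete_of_ring_of_quotients R X P hT1 hP hsing.
have i21 (Xdisc : discrete_top X) : @CX X R = CXP P.
  by rewrite CX_discrete // CXP_discrete.
have i23 (Xdisc : discrete_top X) : ring_of_quotients (@CX X R) (CXP P).
  by rewrite CX_discrete // CXP_discrete //; exact: ring_of_quotients_setT.
split; split.
- exact: i12.
- exact: i21.
- exact: i23.
- exact: i32.
- by move=> CX_eq; exact: i23 (i12 CX_eq).
- by move=> quot; exact: i21 (i32 quot).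
Qed.
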